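(* Let $(\mathcal{A},\mu,\alpha)$ be a multiplicative Hom-alternative superalgebra and define $f:\mathcal{A}^{4}\to\mathcal{A}$ by $f(t,x,y,z)=\widetilde{as}(tx,\alpha(y),\alpha(z))-(-1)^{|t|(|x|+|y|+|z|)}\widetilde{as}(x,y,z)\alpha^{2}(t)-(-1)^{|t||x|}\alpha^{2}(x)\widetilde{as}(t,y,z)$. Then $f$ is super-alternating.
   Context: $\mathcal{A}=\mathcal{A}_0\oplus\mathcal{A}_1$ is a $\mathbb{Z}_2$-graded vector space over an algebraically closed field $\mathbb{K}$ of characteristic $0$; $|x|$ is the parity of homogeneous $x$; even maps preserve parity; we write $\mu(x,y)=xy$ and extend $f$ multilinearly. $\widetilde{as}(x,y,z)=(xy)\alpha(z)-\alpha(x)(yz)$. A Hom-alternative superalgebra is a triple $(\mathcal{A},\mu,\alpha)$ ($\mu$ even bilinear, $\alpha$ even linear) with $\widetilde{as}(x,y,z)+(-1)^{|x||y|}\widetilde{as}(y,x,z)=0$ and $\widetilde{as}(x,y,z)+(-1)^{|y||z|}\widetilde{as}(x,z,y)=0$ for homogeneous $x,y,z$; multiplicative means $\alpha(xy)=\alpha(x)\alpha(y)$. A multilinear map on homogeneous arguments is super-alternating if interchanging any two adjacent arguments $a,b$ multiplies the value by $-(-1)^{|a||b|}$. *)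

From HB Require Import structures.
From mathcomp Require Import all_boot all_order all_algebra.
Set Implicit Arguments. Unset Strict Implicit. Unset Printing Implicit Defensive.
Import Order.TTheory GRing.Theory Num.Theory.
Local Open Scope ring_scope.

(* A Z_2-graded vector space A = A_0 (+) A_1 over K is modelled as the
   product module (A0 * A1); an element x is homogeneous of parity p
   when its component in the other summand vanishes. *)
Definition is_hom (K : fieldType) (A0 A1 : lmodType K) (x : (A0 * A1)%type)
  (p : bool) : bool := if p then x.1 == 0 else x.2 == 0.

Definition sgn (R : pzRingType) (n : nat) : R := (-1) ^+ n.

Definition hom_as (V : zmodType) (mu : V -> V -> V) (alpha : V -> V)
  (x y z : V) : V := mu (mu x y) (alpha z) - mu (alpha x) (mu y z).

Definition multiplicative_hom_alt_superalgebra (K : fieldType)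
  (A0 A1 : lmodType K) (mu : (A0 * A1)%type -> (A0 * A1)%type -> (A0 * A1)%type)
  (alpha : (A0 * A1)%type -> (A0 * A1)%type) : Prop :=
  (forall (a : K) x y z, mu (a *: x + y) z = a *: mu x z + mu y z) /\
  (forall (a : K) x y z, mu z (a *: x + y) = a *: mu z x + mu z y) /\
  (forall (a : K) x y, alpha (a *: x + y) = a *: alpha x + alpha y) /\
  (forall x y (p q : bool), is_hom x p -> is_hom y q -> is_hom (mu x y) (p (+) q)) /\
  (forall x (p : bool), is_hom x p -> is_hom (alpha x) p) /\
  (forall x y z (px py pz : bool), is_hom x px -> is_hom y py -> is_hom z pz ->
     hom_as mu alpha x y z + sgn K (px * py) *: hom_as mu alpha y x z = 0) /\
  (forall x y z (px py pz : bool), is_hom x px -> is_hom y py -> is_hom z pz ->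
     hom_as mu alpha x y z + sgn K (py * pz) *: hom_as mu alpha x z y = 0) /\
  (forall x y, alpha (mu x y) = mu (alpha x) (alpha y)).

(* f(t,x,y,z) for homogeneous t,x,y,z of parities pt,px,py,pz *)
Definition fmap (K : fieldType) (A0 A1 : lmodType K)
  (mu : (A0 * A1)%type -> (A0 * A1)%type -> (A0 * A1)%type)
  (alpha : (A0 * A1)%type -> (A0 * A1)%type)
  (pt px py pz : bool) (t x y z : (A0 * A1)%type) : (A0 * A1)%type :=
  hom_as mu alpha (mu t x) (alpha y) (alpha z)
  - sgn K (pt * (px + py + pz)) *: mu (hom_as mu alpha x y z) (alpha (alpha t))
  - sgn K (pt * px) *: mu (alpha (alpha x)) (hom_as mu alpha t y z).

Definition fmap_super_alternating (K : fieldType) (A0 A1 : lmodType K)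
  (mu : (A0 * A1)%type -> (A0 * A1)%type -> (A0 * A1)%type)
  (alpha : (A0 * A1)%type -> (A0 * A1)%type) : Prop :=
  forall (t x y z : (A0 * A1)%type) (pt px py pz : bool),
    is_hom t pt -> is_hom x px -> is_hom y py -> is_hom z pz ->
    [/\ fmap mu alpha px pt py pz x t y z
          = - (sgn K (pt * px) *: fmap mu alpha pt px py pz t x y z),
        fmap mu alpha pt py px pz t y x z
          = - (sgn K (px * py) *: fmap mu alpha pt px py pz t x y z)
      & fmap mu alpha pt px pz py t x z y
          = - (sgn K (py * pz) *: fmap mu alpha pt px py pz t x y z)].

From mathcomp Require Import all_boot all_order all_algebra.
Set Implicit Arguments. Unset Strict Implicit. Unset Printing Implicit Defensive.
Import GRing.Theory.
Local Open Scope ring_scope.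

(* Every multiplicative Hom-algebra satisfies the Hom-Teichmuller identity,
   which expresses the associator of a product through associators of the
   factors.  Adding two of its instances and using only that the
   Hom-associator is super-alternating (so it may be rotated), one gets, up to
   Koszul signs,
     f(t,x,y,z) = a^2(t) as(x,y,z) + as(t,x,y) a^2(z) - as(a(x),a(y),zt)
                = as(yz,a(t),a(x)) - as(t,x,z) a^2(y) - a^2(z) as(t,x,y),
   where the first form is visibly super-skew in (x,y), the second in (t,x),
   and the definition of f itself in (y,z). *)

Section ZmodNormalize.
Variable V : zmodType.

Inductive zexpr := ZAtom of nat | ZAdd of zexpr & zexpr | ZOpp of zexpr | ZZero.

Fixpoint zeval (env : seq V) (e : zexpr) : V :=
  match e with
  | ZAtom n => nth 0 env n
  | ZAdd a b => zeval env a + zeval env b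
  | ZOpp a => - zeval env a
  | ZZero => 0
  end.

(* A normal form lists the integer coefficient of each atom of [env]. *)
Fixpoint coef_add (c d : seq int) : seq int :=
  match c, d with
  | [::], _ => d
  | _, [::] => c
  | a :: c', b :: d' => (a + b) :: coef_add c' d'
  end.

Fixpoint zcoefs (e : zexpr) : seq int :=
  match e with
  | ZAtom n => rcons (nseq n 0) 1
  | ZAdd a b => coef_add (zcoefs a) (zcoefs b)
  | ZOpp a => map -%R (zcoefs a)
  | ZZero => [::]
  end.

Fixpoint zcombine (env : seq V) (c : seq int) : V :=
  match c with
  | [::] => 0
  | a :: c' => head 0 env *~ a + zcombine (behead env) c'
  end.

Lemma zcombine_add env c d :
  zcombine env (coef_add c d) = zcombine env c + zcombine env d.
Proof.
elim: c d env => [|a c IHc] [|b d] env /=; rewrite ?add0r ?addr0 //.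
by rewrite IHc mulrzDr addrACA.
Qed.

Lemma zcombine_opp env c : zcombine env (map -%R c) = - zcombine env c.
Proof.
elim: c env => [|a c IHc] env /=; first by rewrite oppr0.
by rewrite IHc mulrNz opprD.
Qed.

Lemma zcombine_atom env n : zcombine env (rcons (nseq n 0) 1) = nth 0 env n.
Proof.
elim: n env => [|n IHn] env /=; first by rewrite addr0 nth0.
by rewrite mulr0z add0r IHn nth_behead.
Qed.

Lemma zeval_zcoefs env e : zeval env e = zcombine env (zcoefs e).
Proof.
elim: e => [n|a IHa b IHb|a IHa|] //=.
- by rewrite zcombine_atom.
- by rewrite zcombine_add IHa IHb.
- by rewrite zcombine_opp IHa.
Qed.

Lemma zeval_eq0 env e : all (eq_op^~ 0) (zcoefs e) -> zeval env e = 0.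
Proof.
rewrite zeval_zcoefs; elim: (zcoefs e) env => [|a c IHc] env //=.
by case/andP=> /eqP-> /IHc->; rewrite mulr0z addr0.
Qed.

End ZmodNormalize.

Ltac atom_index x l :=
  lazymatch l with
  | x :: _ => constr:(0%N)
  | _ :: ?l' => let n := atom_index x l' in constr:(n.+1)
  end.

Ltac zmod_atoms t l :=
  lazymatch t with
  | @GRing.add _ ?a ?b => let l' := zmod_atoms a l in zmod_atoms b l'
  | @GRing.opp _ ?a => zmod_atoms a l
  | @GRing.zero _ => l
  | _ => match tt with
         | _ => let _ := atom_index t l in l
         | _ => constr:(t :: l)
         end
  end.

Ltac zmod_reify t l :=
  lazymatch t with
  | @GRing.add _ ?a ?b =>
      let ea := zmod_reify a l in let eb := zmod_reify b l in constr:(ZAdd ea eb)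
  | @GRing.opp _ ?a => let ea := zmod_reify a l in constr:(ZOpp ea)
  | @GRing.zero _ => constr:(ZZero)
  | _ => let n := atom_index t l in constr:(ZAtom n)
  end.

(* Proves [l = r] when both sides are the same Z-linear combination of atoms. *)
Ltac zmod_normalize :=
  apply: subr0_eq;
  lazymatch goal with
  | |- ?v = 0 =>
      let T := type of v in
      let l := zmod_atoms v (@nil T) in
      let e := zmod_reify v l in
      change (zeval l e = 0); apply: zeval_eq0; vm_compute; reflexivity
  end.

Lemma sgn_scale (R : pzRingType) (V : lmodType R) n (v : V) :
  sgn R n *: v = if odd n then - v else v.
Proof. by rewrite /sgn -signr_odd scaler_sign. Qed.

Lemma eq_lincomb (R : pzRingType) (V : lmodType R) (c : R) (a b l r : V) :
  a = b -> l - r = c *: (a - b) -> l = r.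
Proof. by move=> ->; rewrite subrr scaler0; apply: subr0_eq. Qed.
Arguments eq_lincomb {R V} c [a b l r].

(* Splits on the parities occurring in the goal, so that every sign becomes
   [1] or [-1]. *)
Ltac super_normalize :=
  repeat match goal with
         b : bool |- _ => lazymatch goal with |- context [b] => destruct b end
         end;
  rewrite ?scaleNr ?scale1r ?sgn_scale;
  repeat match goal with
         |- context [odd ?n] => let b := eval vm_compute in (odd n) in
                                change (odd n) with b
         end;
  cbv beta iota; zmod_normalize.

Section HomTeichmuller.
Variables (V : zmodType) (mu : V -> V -> V) (alpha : V -> V).
Hypotheses (mu_subl : forall x y z, mu (x - y) z = mu x z - mu y z)
           (mu_subr : forall x y z, mu z (x - y) = mu z x - mu z y)
           (alpha_mul : forall x y, alpha (mu x y) = mu (alpha x) (alpha y)).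

Lemma hom_teichmuller t x y z :
  hom_as mu alpha (mu t x) (alpha y) (alpha z)
  - hom_as mu alpha (alpha t) (mu x y) (alpha z)
  + hom_as mu alpha (alpha t) (alpha x) (mu y z)
  = mu (alpha (alpha t)) (hom_as mu alpha x y z)
    + mu (hom_as mu alpha t x y) (alpha (alpha z)).
Proof. by rewrite /hom_as mu_subl mu_subr !alpha_mul; zmod_normalize. Qed.

End HomTeichmuller.

Section HomAlternativeSuperalgebra.
Variables (K : fieldType) (A0 A1 : lmodType K).
Local Notation A := (A0 * A1)%type.
Variables (mu : A -> A -> A) (alpha : A -> A).
Hypotheses
  (mu_linearl : forall (a : K) x y z, mu (a *: x + y) z = a *: mu x z + mu y z)
  (mu_linearr : forall (a : K) x y z, mu z (a *: x + y) = a *: mu z x + mu z y)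
  (mu_even : forall {x y} {p q : bool},
     is_hom x p -> is_hom y q -> is_hom (mu x y) (p (+) q))
  (alpha_even : forall {x} {p : bool}, is_hom x p -> is_hom (alpha x) p)
  (hom_as_skewl : forall {x y z} {px py pz : bool},
     is_hom x px -> is_hom y py -> is_hom z pz ->
     hom_as mu alpha x y z + sgn K (px * py) *: hom_as mu alpha y x z = 0)
  (hom_as_skewr : forall {x y z} {px py pz : bool},
     is_hom x px -> is_hom y py -> is_hom z pz ->
     hom_as mu alpha x y z + sgn K (py * pz) *: hom_as mu alpha x z y = 0)
  (alpha_mul : forall x y, alpha (mu x y) = mu (alpha x) (alpha y)).

Local Notation assoc := (hom_as mu alpha).
Local Notation "a ^2" := (alpha (alpha a)) (at level 2, format "a ^2").

Lemma mu0l z : mu 0 z = 0.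
Proof.
have := mu_linearl 1 0 0 z; rewrite scaler0 addr0 scale1r.
by move/esym/eqP; rewrite -subr_eq0 addrK => /eqP.
Qed.

Lemma mu0r z : mu z 0 = 0.
Proof.
have := mu_linearr 1 0 0 z; rewrite scaler0 addr0 scale1r.
by move/esym/eqP; rewrite -subr_eq0 addrK => /eqP.
Qed.

Lemma mu_scalel (a : K) x z : mu (a *: x) z = a *: mu x z.
Proof. by rewrite -[a *: x]addr0 mu_linearl mu0l addr0. Qed.

Lemma mu_scaler (a : K) x z : mu z (a *: x) = a *: mu z x.
Proof. by rewrite -[a *: x]addr0 mu_linearr mu0r addr0. Qed.

Lemma mu_oppl x z : mu (- x) z = - mu x z.
Proof. by rewrite -scaleN1r mu_scalel scaleN1r. Qed.

Lemma mu_oppr x z : mu z (- x) = - mu z x.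
Proof. by rewrite -scaleN1r mu_scaler scaleN1r. Qed.

Lemma mu_subl x y z : mu (x - y) z = mu x z - mu y z.
Proof. by have := mu_linearl 1 x (- y) z; rewrite !scale1r mu_oppl. Qed.

Lemma mu_subr x y z : mu z (x - y) = mu z x - mu z y.
Proof. by have := mu_linearr 1 x (- y) z; rewrite !scale1r mu_oppr. Qed.

Let teichmuller := hom_teichmuller mu_subl mu_subr alpha_mul.

Section Homogeneous.
Variables (x y z : A) (px py pz : bool).
Hypotheses (Hx : is_hom x px) (Hy : is_hom y py) (Hz : is_hom z pz).

Lemma hom_as_swap12 : assoc y x z = - (sgn K (px * py) *: assoc x y z).
Proof.
by apply: (eq_lincomb (sgn K (px * py)) (hom_as_skewl Hx Hy Hz)); super_normalize.
Qed.

Lemma hom_as_swap23 : assoc x z y = - (sgn K (py * pz) *: assoc x y z).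
Proof.
by apply: (eq_lincomb (sgn K (py * pz)) (hom_as_skewr Hx Hy Hz)); super_normalize.
Qed.

End Homogeneous.

Lemma hom_as_rotl x y z (px py pz : bool) :
  is_hom x px -> is_hom y py -> is_hom z pz ->
  assoc x y z = sgn K (px * (py + pz)) *: assoc y z x.
Proof.
move=> Hx Hy Hz.
by rewrite (hom_as_swap12 Hy Hx Hz) (hom_as_swap23 Hy Hz Hx); super_normalize.
Qed.

Local Notation mu_linE := (mu_scalel, mu_scaler, mu_oppl, mu_oppr).

Section Fmap.
Variables (t x y z : A) (pt px py pz : bool).
Hypotheses (Ht : is_hom t pt) (Hx : is_hom x px) (Hy : is_hom y py)
           (Hz : is_hom z pz).
Let aHt := alpha_even Ht.
Let aHx := alpha_even Hx.
Let aHy := alpha_even Hy.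
Let aHz := alpha_even Hz.

Lemma fmap_xy_skew_form :
  fmap mu alpha pt px py pz t x y z =
  mu t^2 (assoc x y z) + mu (assoc t x y) z^2
  - sgn K (pt * (px + py + pz)) *: assoc (alpha x) (alpha y) (mu z t).
Proof.
have Ttxyz := teichmuller t x y z.
have Txyzt := teichmuller x y z t.
rewrite (hom_as_rotl aHt (mu_even Hx Hy) aHz)
        (hom_as_rotl aHt aHx (mu_even Hy Hz)) in Ttxyz.
rewrite /fmap (hom_as_rotl Ht Hy Hz) mu_scaler.
apply: (eq_lincomb (sgn K (pt * (px + py + pz))) Txyzt).
by apply: (eq_lincomb 1 Ttxyz); super_normalize.
Qed.

Lemma fmap_tx_skew_form :
  fmap mu alpha pt px py pz t x y z =
  sgn K ((pt + px) * (py + pz)) *: assoc (mu y z) (alpha t) (alpha x)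
  - sgn K (py * pz) *: mu (assoc t x z) y^2
  - sgn K (pz * (pt + px + py)) *: mu z^2 (assoc t x y).
Proof.
have Txyzt := teichmuller x y z t.
have Tztxy := teichmuller z t x y.
rewrite (hom_as_rotl (mu_even Hx Hy) aHz aHt)
        (hom_as_rotl aHx (mu_even Hy Hz) aHt) in Txyzt.
rewrite (hom_as_rotl (mu_even Hz Ht) aHx aHy) (hom_as_rotl aHz (mu_even Ht Hx) aHy)
        (hom_as_rotl Hz Ht Hx) mu_scalel in Tztxy.
rewrite /fmap (hom_as_rotl Ht Hy Hz) mu_scaler.
apply: (eq_lincomb (sgn K (pt * (px + py + pz))) Txyzt).
by apply: (eq_lincomb (- sgn K (pz * (pt + px + py))) Tztxy); super_normalize.
Qed.

End Fmap.

Section Swaps.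
Variables (t x y z : A) (pt px py pz : bool).
Hypotheses (Ht : is_hom t pt) (Hx : is_hom x px) (Hy : is_hom y py)
           (Hz : is_hom z pz).

Lemma fmap_swap_tx : fmap mu alpha px pt py pz x t y z
  = - (sgn K (pt * px) *: fmap mu alpha pt px py pz t x y z).
Proof.
rewrite !fmap_tx_skew_form // (hom_as_swap23 (mu_even Hy Hz) (alpha_even Ht)
  (alpha_even Hx)) (hom_as_swap12 Ht Hx Hz) (hom_as_swap12 Ht Hx Hy) !mu_linE.
by super_normalize.
Qed.

Lemma fmap_swap_xy : fmap mu alpha pt py px pz t y x z
  = - (sgn K (px * py) *: fmap mu alpha pt px py pz t x y z).
Proof.
rewrite !fmap_xy_skew_form // (hom_as_swap12 Hx Hy Hz) (hom_as_swap23 Ht Hx Hy)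
  (hom_as_swap12 (alpha_even Hx) (alpha_even Hy) (mu_even Hz Ht)) !mu_linE.
by super_normalize.
Qed.

Lemma fmap_swap_yz : fmap mu alpha pt px pz py t x z y
  = - (sgn K (py * pz) *: fmap mu alpha pt px py pz t x y z).
Proof.
rewrite /fmap (hom_as_swap23 (mu_even Ht Hx) (alpha_even Hy) (alpha_even Hz))
  (hom_as_swap23 Hx Hy Hz) (hom_as_swap23 Ht Hy Hz) !mu_linE.
by super_normalize.
Qed.

End Swaps.

End HomAlternativeSuperalgebra.

Theorem mainTheorem11 (K : closedFieldType) (hK : [pchar K] =i pred0)
  (A0 A1 : lmodType K)
  (mu : (A0 * A1)%type -> (A0 * A1)%type -> (A0 * A1)%type)
  (alpha : (A0 * A1)%type -> (A0 * A1)%type)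
  (hA : multiplicative_hom_alt_superalgebra mu alpha) :
  fmap_super_alternating mu alpha.
Proof.
case: hA => mu_linl [mu_linr [_ [mu_ev [alpha_ev [skewl [skewr alpha_mul]]]]]].
move=> t x y z pt px py pz Ht Hx Hy Hz.
by split; [apply: fmap_swap_tx | apply: fmap_swap_xy | apply: fmap_swap_yz].
Qed.
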